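(* Let $G$ be a simple graph with at least one edge, maximum degree $\Delta(G)$ and $t(G)$ triangles. If $t(G)\le\lfloor(\Delta(G)+1)/3\rfloor$, then $\lambda_1=\mu_1$, where $\lambda_1$ is the largest $\mathcal{H}$-eigenvalue of $G$ and $\mu_1$ is the largest Laplacian eigenvalue of $G$.
   Context: For an oriented edge $e$ write $e^-$ for its tail and $e^+$ for its head. For distinct edges $e,e'$: $e\leftrightarrow e'$ means $e^+=e'^-$ or $e'^+=e^-$; $e\overset{\pm}{\sim}e'$ means $e^+=e'^+$ or $e^-=e'^-$; $e\vartriangle e'$ means $e,e'$ are two edges of a common triangle. $\triangle(e)$ is the number of triangles containing $e$. The Helmholtzian matrix $\mathcal{H}(G)=(h_{ee'})$ is indexed by edges, with $h_{ee}=\triangle(e)+2$, and for $e\ne e'$: $h_{ee'}=-1$ if $e\leftrightarrow e'$ and not $e\vartriangle e'$; $h_{ee'}=1$ if $e\overset{\pm}{\sim}e'$ and not $e\vartriangle e'$; $h_{ee'}=0$ otherwise. The $\mathcal{H}$-eigenvalues are the eigenvalues of $\mathcal{H}(G)$ for an arbitrary orientation (independent of the orientation). The Laplacian matrix is $L(G)=D(G)-A(G)$. *)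

From HB Require Import structures.
From mathcomp Require Import all_boot all_order all_algebra.
Set Implicit Arguments. Unset Strict Implicit. Unset Printing Implicit Defensive.
Import Order.TTheory GRing.Theory Num.Theory.
Local Open Scope ring_scope.

(* A simple graph on a finite vertex type V is a symmetric irreflexive
   relation e : rel V.  Vertices are indexed by 'I_#|V| via enum_val. *)
Definition simple_graph (V : finType) (e : rel V) : Prop :=
  (forall x, ~~ e x x) /\ (forall x y, e x y = e y x).

Definition orientation (V : finType) (e o : rel V) : Prop :=
  (forall x y, o x y -> e x y) /\ (forall x y, e x y -> (o x y (+) o y x)).

(* oriented edges (tail, head) *)
Definition oedges (V : finType) (o : rel V) : {set V * V} :=
  [set p : V * V | o p.1 p.2].

Definition is_clique (V : finType) (e : rel V) (S : {set V}) : bool :=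
  [forall x in S, forall y in S, (x != y) ==> e x y].

Definition num_triangles (V : finType) (e : rel V) : nat :=
  #|[set S : {set V} | (#|S| == 3)%N && is_clique e S]|.

Definition degree (V : finType) (e : rel V) (v : V) : nat := #|[set w | e v w]|.

Definition max_degree (V : finType) (e : rel V) : nat :=
  \max_(v : V) degree e v.

Definition tri_edge (V : finType) (e : rel V) (a : V * V) : nat :=
  #|[set w | e a.1 w && e a.2 w]|.

Definition in_common_triangle (V : finType) (e : rel V) (a b : V * V) : bool :=
  let S := [set a.1; a.2; b.1; b.2] in (#|S| == 3)%N && is_clique e S.

Definition head_tail (V : finType) (a b : V * V) : bool :=
  (a.2 == b.1) || (b.2 == a.1).

Definition same_end (V : finType) (a b : V * V) : bool :=
  (a.2 == b.2) || (a.1 == b.1).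

Definition helm_entry (R : numDomainType) (V : finType) (e : rel V)
    (a b : V * V) : R :=
  if a == b then (tri_edge e a + 2)%:R
  else if head_tail a b && ~~ in_common_triangle e a b then -1
  else if same_end a b && ~~ in_common_triangle e a b then 1
  else 0.

Definition helmholtzian (R : numDomainType) (V : finType) (e o : rel V) :
    'M[R]_#|oedges o| :=
  \matrix_(i, j) helm_entry R e (enum_val i) (enum_val j).

Definition adjacency (R : numDomainType) (V : finType) (e : rel V) :
    'M[R]_#|V| :=
  \matrix_(i, j) (e (enum_val i) (enum_val j))%:R.

Definition degree_mx (R : numDomainType) (V : finType) (e : rel V) :
    'M[R]_#|V| :=
  diag_mx (\row_i (degree e (enum_val i))%:R).

Definition laplacian (R : numDomainType) (V : finType) (e : rel V) :
    'M[R]_#|V| :=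
  degree_mx R e - adjacency R e.

Definition largest_eigenvalue (F : numFieldType) (n : nat) (A : 'M[F]_n) (l : F) : Prop :=
  eigenvalue A l /\ forall m, eigenvalue A m -> m <= l.

(* Let B be the signed edge-vertex incidence matrix of the orientation, so
   that B^T B = L.  The Helmholtzian splits as H = B B^T + Q, where Q has t(a)
   on the diagonal and -<B_a, B_b> at pairs of distinct edges a, b of a
   common triangle.  Around every triangle the contributions cancel, so
   Q B = 0.  Hence if x H = lambda x, either x B = 0 and lambda is an
   eigenvalue of Q, so that lambda <= 3 max_a t(a) <= 3 t(G) <= Delta + 1 by
   a Gershgorin bound, or x B is an eigenvector of L for lambda.  Conversely
   y |-> y B^T carries every nonzero eigenvalue of L to H.  As the star test
   vector at a vertex of maximum degree gives mu_1 >= Delta + 1 > 0, both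
   largest eigenvalues coincide. *)

From HB Require Import structures.
From mathcomp Require Import all_boot all_order all_algebra.
From mathcomp Require Import complex ring zify.
Set Implicit Arguments.
Unset Strict Implicit.
Unset Printing Implicit Defensive.

Import Order.TTheory GRing.Theory Num.Theory.
Local Open Scope ring_scope.

Lemma row_sqnorm_gt0 (R : realDomainType) n (x : 'rV[R]_n) :
  x != 0 -> 0 < (x *m x^T) 0 0.
Proof.
move=> x0; have sq_ge0 i : true -> 0 <= x 0 i * x^T i 0.
  by rewrite mxE -expr2 sqr_ge0.
rewrite mxE lt_def sumr_ge0 // andbT; apply: contra x0 => /eqP/(psumr_eq0P sq_ge0) x2_eq0.
apply/eqP/rowP => i; have /eqP := x2_eq0 i isT.
by rewrite !mxE mulf_eq0 orbb => /eqP.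
Qed.

Section RealSymmetricSpectrum.
Local Open Scope sesquilinear_scope.
Variable R : rcfType.
Local Notation toC := (real_complex R).

Lemma real_complex_conj (k : R) : (toC k)^* = toC k.
Proof. exact: conjc_real. Qed.

Lemma hermitian_form_le_max_eigenvalue n (A : 'M[R[i]]_n) :
  (0 < n)%N -> A \is hermsymmx ->
  exists2 r : R, eigenvalue A (toC r) &
    forall z : 'rV_n, (z *m A *m z^t*) 0 0 <= toC r * (z *m z^t*) 0 0.
Proof.
move=> n_gt0 Aherm; pose i0 := Ordinal n_gt0.
have /orthomx_spectralP A_eq := hermitian_normalmx Aherm.
set P := spectralmx A in A_eq; set d := spectral_diag A in A_eq.
have P_unitary : P \is unitarymx := spectral_unitarymx A.
have PPt : P *m P^t* = 1%:M by apply/unitarymxP.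
rewrite invmx_unitary // in A_eq.
have d_real i : d 0 i \is Num.real.
  by have /mxOverP := hermitian_spectral_diag_real Aherm; apply.
have [k _ d_max] := @real_arg_maxP _ _ i0 xpredT (fun i => d 0 i) isT (fun i _ => d_real i).
have dk : d 0 k = toC (complex.Re (d 0 k)) by rewrite complexRe; apply/esym/Creal_ReP.
exists (complex.Re (d 0 k)); rewrite -dk.
  apply/eigenvalueP; exists (row k P).
    rewrite A_eq -row_mul !mulmxA PPt mul1mx mul_diag_mx; apply/rowP => j.
    by rewrite !mxE.
  apply/eqP => /(congr1 (fun M => (M *m P^t*) 0 k)).
  by rewrite -row_mul PPt mul0mx !mxE eqxx => /eqP; rewrite oner_eq0.
move=> z; set y := z *m P^t*.
have yt : y^t* = P *m z^t* by rewrite /y trmx_mul map_mxM trmxCK.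
have -> : z *m z^t* = y *m y^t* by rewrite yt /y !mulmxA mulmxKtV.
rewrite A_eq !mulmxA -/y -[y *m _ *m P *m _]mulmxA -yt.
rewrite mul_mx_diag !mxE mulr_sumr; apply: ler_sum => j _.
rewrite !mxE mulrAC [leRHS]mulrC ler_wpM2l ?mul_conjC_ge0 //.
exact: d_max.
Qed.

Lemma symmetric_eigenvalue_ge n (A : 'M[R]_n) (x : 'rV_n) c :
  A^T = A -> x != 0 -> c * (x *m x^T) 0 0 <= (x *m A *m x^T) 0 0 ->
  exists2 l, eigenvalue A l & c <= l.
Proof.
move=> A_sym x0 hc.
have n_gt0 : (0 < n)%N.
  by case: n x x0 {A A_sym hc} => // x; rewrite (thinmx0 x) eqxx.
have A_herm : A ^ toC \is hermsymmx.
  apply/is_hermitianmxP; rewrite expr0 scale1r; apply/matrixP => i j.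
  by rewrite !mxE real_complex_conj -{1}A_sym mxE.
have [r Ar A_le] := hermitian_form_le_max_eigenvalue n_gt0 A_herm.
exists r; first by rewrite -(eigenvalue_map toC).
have xt : (map_mx toC x)^t* = map_mx toC x^T.
  by apply/matrixP => i j; rewrite !mxE real_complex_conj.
have := A_le (map_mx toC x).
rewrite xt -!map_mxM ![map_mx _ _ _ _]mxE -rmorphM lecR => le_r.
by rewrite -(ler_pM2r (row_sqnorm_gt0 x0)); exact: le_trans hc le_r.
Qed.

End RealSymmetricSpectrum.

Lemma eigenvalue_colsum (R : realFieldType) n (Q : 'M[R]_n) l :
  eigenvalue Q l -> exists k, `|l| <= \sum_i `|Q i k|.
Proof.
move=> /eigenvalueP[x xQ x0].
have [i0 xi0] : exists i, x 0 i != 0.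
  apply/existsP; apply: contraR x0 => /existsPn x_eq0.
  by apply/eqP/rowP => i; rewrite mxE; apply/eqP; rewrite -[_ == _]negbK x_eq0.
have [k _ x_max] := @arg_maxP _ R _ i0 xpredT (fun i => `|x 0 i|) isT.
exists k.
have xk_gt0 : 0 < `|x 0 k| by apply: lt_le_trans (x_max i0 isT); rewrite normr_gt0.
rewrite -(ler_pM2r xk_gt0) -normrM.
have -> : l * x 0 k = \sum_i x 0 i * Q i k.
  by move/rowP: xQ => /(_ k); rewrite !mxE => <-.
rewrite mulr_suml; apply: le_trans (ler_norm_sum _ _ _) _.
by apply: ler_sum => i _; rewrite normrM mulrC ler_wpM2l //; exact: x_max.
Qed.

Section EigenvaluesOfProducts.
Variables (F : fieldType) (m n : nat).
Variables (B : 'M[F]_(m, n)) (C : 'M[F]_(n, m)) (Q : 'M[F]_m).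

Lemma eigenvalue_addmx_mulmx l : Q *m B = 0 ->
  eigenvalue (B *m C + Q) l -> eigenvalue (C *m B) l \/ eigenvalue Q l.
Proof.
move=> QB0 /eigenvalueP[x xH x0].
have xBC : x *m B *m C = l *: x - x *m Q by rewrite -xH mulmxDr mulmxA addrK.
have [xB0|xB0] := eqVneq (x *m B) 0.
  right; apply/eigenvalueP; exists x => //.
  by move: xBC; rewrite xB0 mul0mx => /eqP; rewrite eq_sym subr_eq0 => /eqP.
left; apply/eigenvalueP; exists (x *m B) => //.
by rewrite mulmxA xBC mulmxBl -mulmxA QB0 mulmx0 subr0 scalemxAl.
Qed.

Lemma eigenvalue_mulmx_addmx l : C *m Q = 0 -> l != 0 ->
  eigenvalue (C *m B) l -> eigenvalue (B *m C + Q) l.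
Proof.
move=> CQ0 l0 /eigenvalueP[y yCB y0]; apply/eigenvalueP; exists (y *m C).
  by rewrite mulmxDr !mulmxA -[y *m C *m B]mulmxA yCB -mulmxA CQ0 mulmx0 addr0 scalemxAl.
apply: contraNneq l0 => yC0.
have /eqP : l *: y = 0 by rewrite -yCB mulmxA yC0 mul0mx.
by rewrite scalemx_eq0 (negbTE y0) orbF.
Qed.

End EigenvaluesOfProducts.

Section OrientedGraph.
Variables (V : finType) (e o : rel V).
Hypothesis e_simple : simple_graph e.
Hypothesis o_orient : orientation e o.

Lemma edge_irrefl x : e x x = false.
Proof. exact/negbTE/(e_simple.1 x). Qed.

Lemma edge_sym x y : e x y = e y x.
Proof. exact: e_simple.2. Qed.

Lemma edge_neq x y : e x y -> x != y.
Proof. by apply: contraTneq => ->; rewrite edge_irrefl. Qed.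

Lemma oedge_edge x y : o x y -> e x y.
Proof. exact: o_orient.1. Qed.

Lemma oedge_neq x y : o x y -> x != y.
Proof. by move/oedge_edge/edge_neq. Qed.

Lemma oedge_asym x y : o x y -> o y x = false.
Proof.
by move=> oxy; have := o_orient.2 x y (oedge_edge oxy); rewrite oxy; case: (o y x).
Qed.

Lemma card_set3 (u w z : V) : u != w -> w != z -> u != z -> #|[set u; w; z]| = 3%N.
Proof.
move=> uw wz uz; rewrite -setUA cardsU1 cards2 wz !inE negb_or.
by rewrite uw uz.
Qed.

Lemma is_clique3 u w z : u != w -> w != z -> u != z ->
  is_clique e [set u; w; z] = [&& e u w, e w z & e u z].
Proof.
move=> uw wz uz; apply/forall_inP/and3P => [clq | [euw ewz euz]].
  have E a b : a \in [set u; w; z] -> b \in [set u; w; z] -> a != b -> e a b.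
    by move=> /clq /forall_inP /(_ b) bP /bP /implyP.
  by split; apply: E; rewrite ?inE ?eqxx ?orbT.
move=> a; rewrite !inE => /orP[/orP[]|] /eqP-> ; apply/forall_inP => b;
  rewrite !inE => /orP[/orP[]|] /eqP->;
  by rewrite ?eqxx ?euw ?ewz ?euz ?implybT // edge_sym ?euw ?ewz ?euz ?implybT.
Qed.

Lemma tri_edge_le_num_triangles x y : e x y -> (tri_edge e (x, y) <= num_triangles e)%N.
Proof.
move=> exy; pose N := [set w | e x w && e y w].
have inj : {in N &, injective (fun w => [set x; y; w])}.
  move=> w1 w2; rewrite /N inE => N1 _ S12.
  have : w1 \in [set x; y; w2] by rewrite -S12 !inE eqxx !orbT.
  by rewrite !inE => /orP[/orP[]|] /eqP // w1E; move: N1; rewrite w1E edge_irrefl ?andbF.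
rewrite /tri_edge -(card_in_imset inj); apply/subset_leq_card/subsetP => S.
case/imsetP => w; rewrite /N inE => /andP[xw yw] ->.
by rewrite inE card_set3 ?is_clique3 ?exy ?xw ?yw ?edge_neq.
Qed.

Lemma in_common_triangleC a b : in_common_triangle e a b = in_common_triangle e b a.
Proof.
rewrite /in_common_triangle.
have -> // : [set a.1; a.2; b.1; b.2] = [set b.1; b.2; a.1; a.2].
apply/setP => t; rewrite !inE.
by case: (t == a.1); case: (t == a.2); rewrite /= ?orbT ?orbF.
Qed.

Lemma in_common_triangle_rev p q b :
  in_common_triangle e (q, p) b = in_common_triangle e (p, q) b.
Proof.
rewrite /in_common_triangle /=; have -> // : [set q; p; b.1; b.2] = [set p; q; b.1; b.2].
by apply/setP => t; rewrite !inE; case: (t == p); case: (t == q); rewrite /= ?orbT.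
Qed.

Lemma in_common_triangle_revr a p q :
  in_common_triangle e a (q, p) = in_common_triangle e a (p, q).
Proof. by rewrite in_common_triangleC in_common_triangle_rev in_common_triangleC. Qed.

Lemma in_common_triangle_meet u w z : u != w -> w != z -> u != z ->
  in_common_triangle e (u, w) (u, z) = [&& e u w, e w z & e u z].
Proof.
move=> uw wz uz; rewrite /in_common_triangle /=.
have -> : [set u; w; u; z] = [set u; w; z].
  by apply/setP => t; rewrite !inE; case: (t == u); rewrite /= ?orbT ?orbF.
by rewrite card_set3 ?is_clique3.
Qed.

Lemma in_common_triangle_disjoint p q x y :
  p != q -> p != x -> p != y -> q != x -> q != y -> x != y ->
  in_common_triangle e (p, q) (x, y) = false.
Proof.
move=> pq px py qx qy xy; rewrite /in_common_triangle /= -!setUA !cardsU1 cards1.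
by rewrite !inE !negb_or pq px py qx qy xy.
Qed.

Lemma in_common_triangle_refl a : in_common_triangle e a a = false.
Proof.
rewrite /in_common_triangle; have -> : [set a.1; a.2; a.1; a.2] = [set a.1; a.2].
  by apply/setP => t; rewrite !inE; case: (t == a.1); case: (t == a.2).
by rewrite cards2; case: (a.1 != a.2).
Qed.

Lemma in_common_triangle_incident x y q : e x y ->
  e x q && in_common_triangle e (x, q) (x, y) = e x q && e y q.
Proof.
move=> exy; have xy := edge_neq exy.
have [->|qy] := eqVneq q y; first by rewrite in_common_triangle_refl edge_irrefl !andbF.
have [exq|] := boolP (e x q) => //=.
by rewrite in_common_triangle_meet ?(edge_neq exq) // exq exy andbT edge_sym.
Qed.

(* The edges lying in a triangle with xy are xw and yw, for the common
   neighbours w of x and y, each listed here in both orientations. *)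
Lemma common_triangle_indicator x y p q : e x y ->
  (e p q && in_common_triangle e (p, q) (x, y) : nat) =
  (((p == x) && (e x q && e y q)) + ((q == x) && (e x p && e y p)) +
   ((p == y) && (e x q && e y q)) + ((q == y) && (e x p && e y p)))%N.
Proof.
move=> exy; have xy := edge_neq exy; have yx : y != x by rewrite eq_sym.
have eyx : e y x by rewrite edge_sym.
have [->|px] := eqVneq p x.
  rewrite in_common_triangle_incident // !edge_irrefl (negbTE xy) !andbF /=.
  by case: (_ && _).
have [->|py] := eqVneq p y.
  rewrite in_common_triangle_revr in_common_triangle_incident // andbC !edge_irrefl.
  by rewrite !andbF /=; case: (_ && _).
have [->|qx] := eqVneq q x.
  rewrite edge_sym in_common_triangle_rev in_common_triangle_incident //.
  by rewrite (negbTE xy) !edge_irrefl !andbF /=; case: (_ && _).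
have [->|qy] := eqVneq q y.
  rewrite edge_sym in_common_triangle_rev in_common_triangle_revr.
  rewrite in_common_triangle_incident //.
  by rewrite andbC !edge_irrefl !andbF /=; case: (_ && _).
have [/edge_neq pq|//] := boolP (e p q).
by rewrite in_common_triangle_disjoint.
Qed.

Lemma oedges_shared_ends_le1 a b : o a.1 a.2 -> o b.1 b.2 -> a != b ->
  ((a.2 == b.2) + (a.1 == b.1) + (a.2 == b.1) + (a.1 == b.2) <= 1)%N.
Proof.
case: a b => [a1 a2] [b1 b2] /= oa ob; rewrite xpair_eqE.
have a12 := oedge_neq oa; have b12 := oedge_neq ob; have ba := oedge_asym oa.
case: (eqVneq a2 b2) => [E1|N1]; case: (eqVneq a1 b1) => [E2|N2];
  case: (eqVneq a2 b1) => [E3|N3]; case: (eqVneq a1 b2) => [E4|N4] //=; subst.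
all: try by move: a12 b12; rewrite ?eqxx.
by rewrite ob in ba.
Qed.

Section IncidenceMatrix.
Variable R : numDomainType.
Implicit Types (F : V -> R) (G : V -> V -> R).

Lemma natr_oedgeD x y : (o x y)%:R + (o y x)%:R = (e x y)%:R :> R.
Proof.
have [exy|nexy] := boolP (e x y).
  have := o_orient.2 x y exy.
  by case: (o x y); case: (o y x) => //= _; rewrite ?addr0 ?add0r.
have no v w : ~~ e v w -> o v w = false by apply: contraNF; apply: oedge_edge.
by rewrite !no ?addr0 // edge_sym.
Qed.

Lemma sum_indicator F x : \sum_v (v == x)%:R * F v = F x.
Proof.
by rewrite (bigD1 x) //= eqxx mul1r big1 ?addr0 // => v /negbTE ->; rewrite mul0r.
Qed.

Lemma sum_vertices F : \sum_(j < #|V|) F (enum_val j) = \sum_v F v.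
Proof. by rewrite -(big_enum_val (A := mem V)). Qed.

Lemma sum_oedges (F : V * V -> R) :
  \sum_(i < #|oedges o|) F (enum_val i) = \sum_p \sum_q (o p q)%:R * F (p, q).
Proof.
rewrite -(big_enum_val (A := mem (oedges o))) /= big_mkcond pair_big /=.
by apply: eq_bigr => -[p q] _; rewrite inE /=; case: (o p q); rewrite ?mul1r ?mul0r.
Qed.

Lemma sum_oedges_sym G : (forall p q, G p q = G q p) ->
  (\sum_p \sum_q (o p q)%:R * G p q) *+ 2 = \sum_p \sum_q (e p q)%:R * G p q.
Proof.
move=> G_sym; rewrite mulr2n {2}exchange_big -big_split /=.
apply: eq_bigr => p _; rewrite -big_split /=; apply: eq_bigr => q _.
by rewrite G_sym -mulrDl natr_oedgeD.
Qed.

Lemma sum_indicator_andl (P : pred V) G z :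
  \sum_p \sum_q ((p == z) && P q)%:R * G p q = \sum_q (P q)%:R * G z q.
Proof.
under eq_bigr do under eq_bigr do rewrite -mulnb natrM -mulrA.
by under eq_bigr do rewrite -mulr_sumr; rewrite sum_indicator.
Qed.

Lemma sum_indicator_andr (P : pred V) G z :
  \sum_p \sum_q ((q == z) && P p)%:R * G p q = \sum_p (P p)%:R * G p z.
Proof.
rewrite exchange_big /=.
under eq_bigr do under eq_bigr do rewrite -mulnb natrM -mulrA.
by under eq_bigr do rewrite -mulr_sumr; rewrite sum_indicator.
Qed.

Lemma natr_card_set (P : pred V) : (#|[set u | P u]|)%:R = \sum_u (P u)%:R :> R.
Proof.
rewrite -sum1_card natr_sum big_mkcond /=; apply: eq_bigr => u _.
by rewrite inE; case: (P u).
Qed.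

Lemma sum_oedges_incident v :
  \sum_p \sum_q (o p q)%:R * ((p == v)%:R + (q == v)%:R) = (degree e v)%:R :> R.
Proof.
under eq_bigr do under eq_bigr do rewrite mulrDr ![(o _ _)%:R * _]mulrC.
under eq_bigr do rewrite big_split /= sum_indicator -mulr_sumr.
rewrite big_split /= sum_indicator natr_card_set -big_split /=.
by apply: eq_bigr => u _; rewrite natr_oedgeD.
Qed.

Lemma sum_common_triangle x y (G : V -> V -> R) :
  e x y -> (forall p q, G p q = G q p) ->
  \sum_p \sum_q (o p q)%:R * ((in_common_triangle e (p, q) (x, y))%:R * G p q) =
  \sum_w (e x w && e y w)%:R * (G x w + G y w).
Proof.
move=> exy G_sym; apply/eqP; rewrite -(eqr_pMn2r (isT : 0 < 2)%N); apply/eqP.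
rewrite sum_oedges_sym => [|p q]; last by rewrite in_common_triangle_rev G_sym.
under eq_bigr do under eq_bigr do
  rewrite mulrA -natrM mulnb common_triangle_indicator // !natrD !mulrDl.
rewrite !(big_split, eq_bigr _ (fun p _ => big_split _ _ _ _ _)) /=.
rewrite !sum_indicator_andl !sum_indicator_andr.
rewrite mulr2n -!big_split /=; apply: eq_bigr => w _.
by rewrite (G_sym w x) (G_sym w y); ring.
Qed.

Definition incidence (a : V * V) (v : V) : R := (v == a.2)%:R - (v == a.1)%:R.

Definition incidence_mx : 'M[R]_(#|oedges o|, #|V|) :=
  \matrix_(i, j) incidence (enum_val i) (enum_val j).

Lemma sum_oedges_incidence2 v w :
  \sum_p \sum_q (o p q)%:R * (incidence (p, q) v * incidence (p, q) w) =
  (degree e v)%:R * (v == w)%:R - (e v w)%:R.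
Proof.
have split_v p q : (o p q)%:R * (incidence (p, q) v * incidence (p, q) w) =
    (q == v)%:R * ((o p q)%:R * incidence (p, q) w) -
    (p == v)%:R * ((o p q)%:R * incidence (p, q) w).
  by rewrite /incidence /= ![(v == _)]eq_sym; ring.
under eq_bigr do
  rewrite (eq_bigr _ (fun q _ => split_v _ q)) sumrB sum_indicator -mulr_sumr.
rewrite sumrB sum_indicator /incidence /=.
under eq_bigr do rewrite mulrBr.
under [X in _ - X = _]eq_bigr do rewrite mulrBr.
have sum_o_eq (F : V -> R) u : \sum_p F p * (u == p)%:R = F u.
  by rewrite -[RHS]sum_indicator; apply: eq_bigr => p _; rewrite mulrC eq_sym.
have deg_o : (degree e v)%:R = \sum_u (o u v)%:R + \sum_u (o v u)%:R :> R.
  rewrite natr_card_set -big_split /=; apply: eq_bigr => u _.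
  by rewrite natr_oedgeD edge_sym.
rewrite !sumrB -!mulr_suml !sum_o_eq deg_o -(natr_oedgeD v w) [w == v]eq_sym.
ring.
Qed.

Lemma incidence_gram : incidence_mx^T *m incidence_mx = laplacian R e.
Proof.
apply/matrixP => i j; rewrite !mxE.
under eq_bigr do rewrite !mxE.
rewrite (sum_oedges (fun a => incidence a (enum_val i) * incidence a (enum_val j))).
by rewrite sum_oedges_incidence2 (inj_eq enum_val_inj) mulr_natr.
Qed.

Definition edge_dot (a b : V * V) : R := \sum_v incidence a v * incidence b v.

Lemma edge_dotE a b : edge_dot a b =
  (a.2 == b.2)%:R - (a.2 == b.1)%:R - (a.1 == b.2)%:R + (a.1 == b.1)%:R.
Proof.
rewrite /edge_dot /incidence; under eq_bigr do rewrite mulrBl !mulrBr.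
by rewrite !sumrB !sum_indicator; ring.
Qed.

Lemma edge_dotC a b : edge_dot a b = edge_dot b a.
Proof. by apply: eq_bigr => v _; rewrite mulrC. Qed.

Definition triangle_term (a b : V * V) : R :=
  (a == b)%:R * (tri_edge e a)%:R - (in_common_triangle e a b)%:R * edge_dot a b.

Lemma triangle_termC a b : triangle_term a b = triangle_term b a.
Proof.
rewrite /triangle_term in_common_triangleC edge_dotC eq_sym.
by case: (eqVneq b a) => [->|]; rewrite ?mul0r.
Qed.

Lemma helm_entry_oedges a b : o a.1 a.2 -> o b.1 b.2 ->
  helm_entry R e a b = edge_dot a b + triangle_term a b.
Proof.
move=> oa ob; rewrite /helm_entry /triangle_term.
have [<-|ab] := eqVneq a b.
  have a12 := negbTE (oedge_neq oa).
  by rewrite in_common_triangle_refl edge_dotE a12 eq_sym a12 !eqxx natrD /=; ring.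
move: (oedges_shared_ends_le1 oa ob ab).
rewrite edge_dotE /head_tail /same_end [b.2 == _]eq_sym.
by case: (in_common_triangle e a b); case: (a.2 == b.2); case: (a.1 == b.1);
  case: (a.2 == b.1); case: (a.1 == b.2) => //= _; ring.
Qed.

Lemma norm_edge_dot_le1 a b : o a.1 a.2 -> o b.1 b.2 -> a != b -> `|edge_dot a b| <= 1.
Proof.
move=> oa ob ab; move: (oedges_shared_ends_le1 oa ob ab); rewrite edge_dotE.
by case: (a.2 == b.2); case: (a.1 == b.1); case: (a.2 == b.1); case: (a.1 == b.2) => //= _;
  rewrite ?subr0 ?sub0r ?add0r ?addr0 ?normrN ?normr1 ?normr0.
Qed.

Lemma sum_oedges_indicator (F : V -> V -> R) x y :
  \sum_p \sum_q (o p q)%:R * (((p, q) == (x, y))%:R * F p q) = (o x y)%:R * F x y.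
Proof.
under eq_bigr do under eq_bigr do rewrite mulrCA xpair_eqE.
by rewrite (sum_indicator_andl (fun q => q == y)) sum_indicator.
Qed.

Lemma sum_triangle_term_incidence x y v : o x y ->
  \sum_p \sum_q (o p q)%:R * (triangle_term (p, q) (x, y) * incidence (p, q) v) = 0.
Proof.
move=> oxy; have exy := oedge_edge oxy.
have split_term p q : (o p q)%:R * (triangle_term (p, q) (x, y) * incidence (p, q) v) =
    (o p q)%:R * (((p, q) == (x, y))%:R * ((tri_edge e (p, q))%:R * incidence (p, q) v)) -
    (o p q)%:R * ((in_common_triangle e (p, q) (x, y))%:R *
                  (edge_dot (p, q) (x, y) * incidence (p, q) v)).
  by rewrite /triangle_term; ring.
under eq_bigr do rewrite (eq_bigr _ (fun q _ => split_term _ q)) sumrB.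
rewrite sumrB sum_oedges_indicator oxy mul1r.
rewrite sum_common_triangle // => [|p q]; last by rewrite !edge_dotE /incidence /=; ring.
rewrite /tri_edge natr_card_set /= mulr_suml -sumrB big1 // => w _.
(* The two other edges xw and yw of the triangle xyw together
   contribute exactly the incidence vector of xy. *)
have [/andP[exw eyw]|] := boolP (e x w && e y w); last by rewrite !mul0r subrr.
have wx : (w == x) = false by rewrite eq_sym; apply/negbTE/edge_neq.
have wy : (w == y) = false by rewrite eq_sym; apply/negbTE/edge_neq.
have xy : (x == y) = false := negbTE (edge_neq exy).
by rewrite !edge_dotE /incidence /= !eqxx wx wy xy [y == x]eq_sym xy /=; ring.
Qed.

Lemma sum_norm_triangle_term x y : o x y ->
  \sum_p \sum_q (o p q)%:R * `|triangle_term (p, q) (x, y)| <= 3 * (tri_edge e (x, y))%:R.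
Proof.
move=> oxy; have exy := oedge_edge oxy.
have term_le p q : (o p q)%:R * `|triangle_term (p, q) (x, y)| <=
    (o p q)%:R * (((p, q) == (x, y))%:R * (tri_edge e (x, y))%:R) +
    (o p q)%:R * ((in_common_triangle e (p, q) (x, y))%:R * 1).
  have [opq|] := boolP (o p q); last by rewrite !mul0r addr0.
  rewrite !mul1r mulr1 /triangle_term.
  have [[-> ->]|pq_xy] := eqVneq (p, q) (x, y).
    by rewrite in_common_triangle_refl mul0r subr0 mul1r normr_nat addr0.
  rewrite mul0r add0r normrN normrM normr_nat mul0r add0r.
  by apply: ler_piMr => //; apply: norm_edge_dot_le1.
apply: le_trans (ler_sum _ (fun p _ => ler_sum _ (fun q _ => term_le p q))) _.
rewrite (eq_bigr _ (fun p _ => big_split _ _ _ _ _)) big_split /=.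
rewrite sum_oedges_indicator oxy mul1r.
rewrite sum_common_triangle // /tri_edge natr_card_set /= -mulr_suml.
by rewrite -[3]/(1 + 2) mulrDl mul1r lerD2l mulrC -[1 + 1]/2.
Qed.

Definition triangle_mx : 'M[R]_#|oedges o| :=
  \matrix_(i, j) triangle_term (enum_val i) (enum_val j).

Lemma enum_val_oedges (i : 'I_#|oedges o|) : o (enum_val i).1 (enum_val i).2.
Proof. by have := enum_valP i; rewrite inE. Qed.

Lemma helmholtzianE : helmholtzian R e o = incidence_mx *m incidence_mx^T + triangle_mx.
Proof.
apply/matrixP => i j; rewrite !mxE helm_entry_oedges ?enum_val_oedges //; congr (_ + _).
under [RHS]eq_bigr do rewrite !mxE.
by rewrite (sum_vertices (fun v => incidence (enum_val i) v * incidence (enum_val j) v)).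
Qed.

Lemma triangle_mx_sym : triangle_mx^T = triangle_mx.
Proof. by apply/matrixP => i j; rewrite !mxE triangle_termC. Qed.

Lemma triangle_mx_incidence : triangle_mx *m incidence_mx = 0.
Proof.
apply/matrixP => i j; rewrite !mxE.
under eq_bigr do rewrite !mxE triangle_termC.
rewrite (sum_oedges (fun a => triangle_term a (enum_val i) * incidence a (enum_val j))).
by have := enum_val_oedges i; case: (enum_val i) => x y; apply: sum_triangle_term_incidence.
Qed.

Lemma trmx_incidence_triangle_mx : incidence_mx^T *m triangle_mx = 0.
Proof. by rewrite -triangle_mx_sym -trmx_mul triangle_mx_incidence trmx0. Qed.

Lemma triangle_mx_colsum k :
  \sum_i `|triangle_mx i k| <= 3 * (tri_edge e (enum_val k))%:R.
Proof.
under eq_bigr do rewrite mxE.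
rewrite (sum_oedges (fun a => `|triangle_term a (enum_val k)|)).
by have := enum_val_oedges k; case: (enum_val k) => x y; apply: sum_norm_triangle_term.
Qed.

Lemma laplacian_quadratic_form (f : V -> R) :
  let X := \row_j f (enum_val j) in
  (X *m laplacian R e *m X^T) 0 0 = \sum_p \sum_q (o p q)%:R * (f q - f p) ^+ 2.
Proof.
move=> X; have XBt k : (X *m incidence_mx^T) 0 k = f (enum_val k).2 - f (enum_val k).1.
  rewrite mxE; under eq_bigr do rewrite !mxE.
  rewrite (sum_vertices (fun v => f v * incidence (enum_val k) v)) /incidence.
  under eq_bigr do rewrite mulrBr ![f _ * _]mulrC.
  by rewrite sumrB !sum_indicator.
rewrite -incidence_gram mulmxA -[X *m _ *m _ *m _]mulmxA -{2}(trmxK incidence_mx).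
rewrite -trmx_mul mxE; under eq_bigr do rewrite [_^T _ _]mxE XBt -expr2.
exact: (sum_oedges (fun a => (f a.2 - f a.1) ^+ 2)).
Qed.

End IncidenceMatrix.

Section RealSpectrum.
Variable R : rcfType.

Lemma laplacian_sym : (laplacian R e)^T = laplacian R e.
Proof. by rewrite -incidence_gram trmx_mul trmxK. Qed.

Lemma laplacian_eigenvalue_ge_degree v0 : (0 < degree e v0)%N ->
  exists2 l, eigenvalue (laplacian R e) l & (degree e v0)%:R + 1 <= l.
Proof.
move=> d_gt0; set d : R := (degree e v0)%:R.
(* Each of the d edges at v0 contributes (d + 1)^2 to the quadratic form
   of the star vector f, whose squared norm is d^2 + d. *)
pose f v : R := if v == v0 then d else - (e v0 v)%:R.
pose X : 'rV[R]_#|V| := \row_j f (enum_val j).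
apply: (symmetric_eigenvalue_ge laplacian_sym (x := X)).
  apply/eqP => /rowP /(_ (enum_rank v0)); rewrite !mxE enum_rankK /f eqxx.
  by move/eqP; rewrite pnatr_eq0 => /eqP d0; rewrite d0 in d_gt0.
have XXt : (X *m X^T) 0 0 = d ^+ 2 + d.
  rewrite mxE; under eq_bigr do rewrite !mxE -expr2.
  rewrite (sum_vertices (fun v => f v ^+ 2)) (bigD1 v0) //= /f eqxx; congr (_ + _).
  rewrite /d natr_card_set [in RHS](bigD1 v0) //= edge_irrefl add0r.
  apply: eq_bigr => v /negbTE ->.
  by rewrite sqrrN; case: (e v0 v); rewrite ?expr1n ?expr0n.
have edge_term p q : (o p q)%:R * (((p == v0)%:R + (q == v0)%:R) * (d + 1) ^+ 2) <=
    (o p q)%:R * (f q - f p) ^+ 2.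
  have [opq|] := boolP (o p q); last by rewrite !mul0r.
  have epq := oedge_edge opq; have pq := oedge_neq opq; rewrite !mul1r /f.
  have [pE|pv0] := eqVneq p v0.
    rewrite -pE eq_sym (negbTE pq) epq addr0 mul1r.
    by rewrite [leRHS](_ : _ = (d + 1) ^+ 2) //=; ring.
  have [qE|qv0] := eqVneq q v0; last by rewrite add0r mul0r sqr_ge0.
  rewrite -qE edge_sym epq add0r mul1r.
  by rewrite [leRHS](_ : _ = (d + 1) ^+ 2) //=; ring.
rewrite laplacian_quadratic_form XXt.
apply: le_trans (ler_sum _ (fun p _ => ler_sum _ (fun q _ => edge_term p q))).
under eq_bigr do under eq_bigr do rewrite mulrA.
under eq_bigr do rewrite -mulr_suml.
rewrite -mulr_suml sum_oedges_incident.
by rewrite [leRHS](_ : _ = (d + 1) * (d ^+ 2 + d)) //; ring.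
Qed.

Lemma helmholtzian_laplacian_max_eigenvalue (l m : R) : (exists u v, e u v) ->
  (3 * num_triangles e <= max_degree e + 1)%N ->
  largest_eigenvalue (helmholtzian R e o) l ->
  largest_eigenvalue (laplacian R e) m -> l = m.
Proof.
move=> [u [v euv]] t_le [l_eig l_max] [m_eig m_max].
have [v0 Delta_v0] : exists v0, max_degree e = degree e v0.
  by exists [arg max_(i > u) degree e i]%N; rewrite /max_degree (bigop.bigmax_eq_arg u).
have d_gt0 : (0 < degree e v0)%N.
  rewrite -Delta_v0 (leq_trans _ (bigop.leq_bigmax u)) //.
  by apply/card_gt0P; exists v; rewrite inE.
have [l0 l0_eig l0_ge] := laplacian_eigenvalue_ge_degree d_gt0.
have m_ge : (max_degree e)%:R + 1 <= m.
  by rewrite Delta_v0 (le_trans l0_ge (m_max _ l0_eig)).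
apply/le_anti/andP; split.
  rewrite helmholtzianE in l_eig.
  have [|/eigenvalue_colsum[k l_le]] :=
    eigenvalue_addmx_mulmx (triangle_mx_incidence R) l_eig.
    by rewrite incidence_gram; apply: m_max.
  apply: le_trans (ler_norm l) (le_trans l_le (le_trans (triangle_mx_colsum R k) _)).
  apply: le_trans m_ge; rewrite -natrM natr1 ler_nat.
  have := enum_val_oedges k; case: (enum_val k) => x y.
  move=> /oedge_edge /tri_edge_le_num_triangles /= tri_le.
  lia.
apply: l_max; rewrite -incidence_gram in m_eig; rewrite helmholtzianE.
apply: eigenvalue_mulmx_addmx (trmx_incidence_triangle_mx R) _ m_eig.
by rewrite gt_eqF // (lt_le_trans _ m_ge) // ltr_wpDl.
Qed.

End RealSpectrum.

End OrientedGraph.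

Theorem corollary5p4 (R : rcfType) (V : finType) (e : rel V) (o : rel V)
    (lambda1 mu1 : R) :
  simple_graph e ->
  (exists u v, e u v) ->
  orientation e o ->
  (num_triangles e <= (max_degree e + 1) %/ 3)%N ->
  largest_eigenvalue (helmholtzian R e o) lambda1 ->
  largest_eigenvalue (laplacian R e) mu1 ->
  lambda1 = mu1.
Proof.
move=> e_simple e_nonempty o_orient t_le.
apply: helmholtzian_laplacian_max_eigenvalue => //.
by rewrite mulnC -leq_divRL.
Qed.
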